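(* Let $X$ be a connected quandle, $a\in X$, and let $\widetilde X$ be the quandle $\mathrm{Ker}(\varepsilon_0)$ with operation $g\lhd h=e_a^{-1}gh^{-1}e_ah$. Then $\widetilde X$ is connected.
   Context: A quandle is a set $X$ with a binary operation $\lhd$ such that $a\lhd a=a$, each $x\mapsto x\lhd a$ is bijective, and $(a\lhd b)\lhd c=(a\lhd c)\lhd(b\lhd c)$. The adjoint group $\mathrm{As}(X)$ has generators $e_x$ ($x\in X$) and relations $e_{x\lhd y}=e_y^{-1}e_xe_y$; it acts on $X$ by $x\cdot e_y=x\lhd y$, and $X$ is connected if this action is transitive. For connected $X$, $\varepsilon_0:\mathrm{As}(X)\to\mathbb{Z}$ is the homomorphism with $\varepsilon_0(e_x)=1$ for all $x$. *)

From Stdlib Require Import List ZArith Relations.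
Import ListNotations.
Set Implicit Arguments.

Record quandle := Quandle {
  qcar :> Type;
  qop : qcar -> qcar -> qcar;
  qop_idem : forall a, qop a a = a;
  qop_bij : forall a, exists inv : qcar -> qcar,
      (forall x, inv (qop x a) = x) /\ (forall x, qop (inv x) a = x);
  qop_dist : forall a b c, qop (qop a b) c = qop (qop a c) (qop b c)
}.

(* The (right) action of the inner group generated by the bijections
   x |-> x <| y on X; its orbits are the classes of the equivalence closure
   of the one-step relation x ~ x <| y. *)
Definition connected (X : quandle) : Prop :=
  forall x y : X, clos_refl_sym_trans X (fun u v => exists z, v = @qop X u z) x y.

Section Adjoint.
Variable X : quandle.

(* Words in the generators e_x (true) and e_x^{-1} (false); the product in
   As(X) is concatenation (reading left to right). *)
Definition word := list (X * bool).

Definition winv (w : word) : word := rev (map (fun p => (fst p, negb (snd p))) w).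

Definition gen (x : X) : word := [(x, true)].
Definition geninv (x : X) : word := [(x, false)].

Inductive As_basic : word -> word -> Prop :=
| As_cancel : forall x b, As_basic [(x, b); (x, negb b)] []
| As_rel : forall x y, As_basic [(@qop X x y, true)] [(y, false); (x, true); (y, true)].

Inductive As_eq : word -> word -> Prop :=
| As_eq_refl : forall w, As_eq w w
| As_eq_sym : forall u v, As_eq u v -> As_eq v u
| As_eq_trans : forall u v w, As_eq u v -> As_eq v w -> As_eq u w
| As_eq_ctx : forall l u v r, As_basic u v -> As_eq (l ++ u ++ r) (l ++ v ++ r).

Definition eps0 (w : word) : Z :=
  @fold_right Z (X * bool)
  (fun p s => ((if snd p then 1 else -1) + s)%Z) 0%Z w.

Definition tilde_op (a : X) (g h : word) : word :=
  geninv a ++ g ++ winv h ++ gen a ++ h.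

Definition tilde_connected (a : X) : Prop :=
  forall g h : word, eps0 g = 0%Z -> eps0 h = 0%Z ->
    clos_refl_sym_trans word
      (fun u v => As_eq u v \/ exists k, eps0 k = 0%Z /\ As_eq v (tilde_op a u k))
      g h.
End Adjoint.

(* Call C the class of the empty word (the identity) for the equivalence relation
   generated by g ~ g <| k.  Since (g k) <| (h k) = (g <| h) k, this relation is
   invariant under right multiplication by Ker eps0, so C is a subgroup of Ker eps0
   containing every commutator [e_a, h] = e_a^-1 h^-1 e_a h = 1 <| h.  Its normal
   core N in Ker eps0 still contains these commutators, hence is stable under
   conjugation by e_a, as e_a^-1 g e_a = [e_a, g^-1] g.  With t_x = e_x e_a^-1, the
   quandle relation gives t_(x <| z) = [e_a, t_x^-1 t_z] (t_z^-1 t_x t_z), so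
   t_(x <| z) lies in N iff t_x does; as t_a = 1 and X is connected, every t_x lies
   in N.  Peeling off one letter at a time, w e_a^(-eps0 w) lies in N for every
   word w; in particular Ker eps0 is contained in N, hence in C. *)

From Stdlib Require Import List ZArith Relations Lia Bool Setoid Morphisms.
Import ListNotations.

Section AdjointGroup.
Variable X : quandle.

Local Notation word := (word X).

Global Instance As_eq_Equivalence : Equivalence (@As_eq X).
Proof.
  split; intros ?; [apply As_eq_refl | apply As_eq_sym | apply As_eq_trans].
Qed.

Lemma As_eq_context (l r : word) {u v : word} :
  As_eq u v -> As_eq (l ++ u ++ r) (l ++ v ++ r).
Proof.
  induction 1 as [| | |l' u v r' Huv]; try (etransitivity; eassumption); try easy.
  rewrite <- !app_assoc. pose proof (As_eq_ctx (l ++ l') (r' ++ r) Huv) as H.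
  now rewrite <- !app_assoc in H.
Qed.

Global Instance app_As_eq_Proper : Proper (@As_eq X ==> @As_eq X ==> @As_eq X) (@app _).
Proof.
  intros u u' Hu v v' Hv. transitivity (u' ++ v).
  - exact (As_eq_context [] v Hu).
  - pose proof (As_eq_context u' [] Hv) as H. now rewrite !app_nil_r in H.
Qed.

Global Instance cons_As_eq_Proper (p : X * bool) :
  Proper (@As_eq X ==> @As_eq X) (cons p).
Proof. intros u v H. change (As_eq ([p] ++ u) ([p] ++ v)). now rewrite H. Qed.

Lemma winv_app (u v : word) : winv (u ++ v) = winv v ++ winv u.
Proof. unfold winv. now rewrite map_app, rev_app_distr. Qed.

Lemma winv_winv (u : word) : winv (winv u) = u.
Proof.
  induction u as [|[x b] u IH]; [reflexivity|].
  change ((x, b) :: u) with ([(x, b)] ++ u).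
  now rewrite !winv_app, IH; cbn; rewrite negb_involutive.
Qed.

Lemma winv_gen (x : X) : winv (gen X x) = geninv X x.
Proof. reflexivity. Qed.

Lemma winv_geninv (x : X) : winv (geninv X x) = gen X x.
Proof. reflexivity. Qed.

Lemma mul_winv_r (w : word) : As_eq (w ++ winv w) [].
Proof.
  induction w as [|[x b] w IH]; [reflexivity|].
  change ((x, b) :: w) with ([(x, b)] ++ w).
  rewrite winv_app, <- app_assoc, (app_assoc w), IH.
  apply (As_eq_ctx [] [] (As_cancel X x b)).
Qed.

Lemma mul_winv_l (w : word) : As_eq (winv w ++ w) [].
Proof. rewrite <- (winv_winv w) at 2. apply mul_winv_r. Qed.

Lemma mul_winv_rK (w r : word) : As_eq (w ++ winv w ++ r) r.
Proof. now rewrite app_assoc, mul_winv_r. Qed.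

Lemma mul_winv_lK (w r : word) : As_eq (winv w ++ w ++ r) r.
Proof. now rewrite app_assoc, mul_winv_l. Qed.

Lemma eps0_app (u v : word) : eps0 (u ++ v) = (eps0 u + eps0 v)%Z.
Proof.
  induction u as [|p u IH]; [reflexivity|].
  cbn [app]. unfold eps0 in *; cbn [fold_right]. rewrite IH. lia.
Qed.

Lemma eps0_winv (u : word) : eps0 (winv u) = (- eps0 u)%Z.
Proof.
  induction u as [|[x b] u IH]; [reflexivity|].
  change ((x, b) :: u) with ([(x, b)] ++ u).
  rewrite winv_app, !eps0_app, IH. destruct b; cbn -[Z.add]; lia.
Qed.

Lemma eps0_gen (x : X) : eps0 (gen X x) = 1%Z.
Proof. reflexivity. Qed.

Lemma eps0_geninv (x : X) : eps0 (geninv X x) = (-1)%Z.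
Proof. reflexivity. Qed.

Global Instance eps0_As_eq_Proper : Proper (@As_eq X ==> eq) (@eps0 X).
Proof.
  intros u v H; induction H as [| | |l u v r Huv]; try congruence.
  rewrite !eps0_app. destruct Huv as [x b|]; [destruct b|]; cbn; lia.
Qed.

Variable a : X.

Definition tilde_step (u v : word) : Prop :=
  As_eq u v \/ exists k, eps0 k = 0%Z /\ As_eq v (tilde_op a u k).

Definition tilde_equiv : relation word := clos_refl_sym_trans word tilde_step.

Global Instance tilde_equiv_Equivalence : Equivalence tilde_equiv.
Proof.
  split; intros ?; [apply rst_refl | apply rst_sym | apply rst_trans].
Qed.

Lemma As_eq_tilde_equiv (u v : word) : As_eq u v -> tilde_equiv u v.
Proof. intros H; apply rst_step; left; exact H. Qed.

Global Instance tilde_equiv_As_eq_Proper :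
  Proper (@As_eq X ==> @As_eq X ==> iff) tilde_equiv.
Proof.
  intros u u' Hu v v' Hv; apply As_eq_tilde_equiv in Hu, Hv.
  now rewrite Hu, Hv.
Qed.

Lemma tilde_equiv_op (u k : word) : eps0 k = 0%Z -> tilde_equiv u (tilde_op a u k).
Proof. intros Hk; apply rst_step; right; exists k; split; [exact Hk | reflexivity]. Qed.

Lemma tilde_equiv_eps0 (u v : word) : tilde_equiv u v -> eps0 u = eps0 v.
Proof.
  induction 1 as [u v [Huv | [k [Hk Hv]]]| | |]; try congruence.
  - now rewrite Huv.
  - rewrite Hv. unfold tilde_op. rewrite !eps0_app, eps0_winv, eps0_gen, eps0_geninv, Hk. lia.
Qed.

Lemma tilde_op_app_r (u h k : word) :
  As_eq (tilde_op a (u ++ k) (h ++ k)) (tilde_op a u h ++ k).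
Proof.
  unfold tilde_op. rewrite winv_app, <- !app_assoc.
  now rewrite (mul_winv_rK k).
Qed.

Lemma tilde_equiv_app_r (k u v : word) :
  eps0 k = 0%Z -> tilde_equiv u v -> tilde_equiv (u ++ k) (v ++ k).
Proof.
  intros Hk; induction 1 as [u v [Huv | [h [Hh Hv]]]| | |].
  - apply As_eq_tilde_equiv. now rewrite Huv.
  - rewrite Hv, <- tilde_op_app_r. apply tilde_equiv_op. rewrite eps0_app; lia.
  - reflexivity.
  - now symmetry.
  - etransitivity; eassumption.
Qed.

Definition comm_a (h : word) : word := geninv X a ++ winv h ++ gen X a ++ h.

Lemma eps0_comm_a (h : word) : eps0 (comm_a h) = 0%Z.
Proof. unfold comm_a. rewrite !eps0_app, eps0_winv, eps0_gen, eps0_geninv. lia. Qed.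

Definition component_one (g : word) : Prop := tilde_equiv g [].

Global Instance component_one_Proper : Proper (@As_eq X ==> iff) component_one.
Proof. intros u v H. unfold component_one. now rewrite H. Qed.

Lemma component_one_eps0 (g : word) : component_one g -> eps0 g = 0%Z.
Proof. apply tilde_equiv_eps0. Qed.

Lemma component_one_nil : component_one nil.
Proof. apply rst_refl. Qed.

Lemma component_one_app (g h : word) :
  component_one g -> component_one h -> component_one (g ++ h).
Proof.
  intros Hg Hh. unfold component_one in *. transitivity ([] ++ h); [|exact Hh].
  apply (tilde_equiv_app_r h), Hg. now apply component_one_eps0.
Qed.

Lemma component_one_winv (g : word) : component_one g -> component_one (winv g).
Proof.
  intros Hg. unfold component_one in *. symmetry.
  transitivity (g ++ winv g).
  { apply As_eq_tilde_equiv. symmetry. apply mul_winv_r. }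
  refine (tilde_equiv_app_r (winv g) g nil _ Hg).
  now rewrite eps0_winv, (component_one_eps0 _ Hg).
Qed.

Lemma component_one_comm_a (h : word) : eps0 h = 0%Z -> component_one (comm_a h).
Proof. intros Hh. unfold component_one. symmetry. exact (tilde_equiv_op [] h Hh). Qed.

Definition normal_core (g : word) : Prop :=
  forall k, eps0 k = 0%Z -> component_one (winv k ++ g ++ k).

Global Instance normal_core_Proper : Proper (@As_eq X ==> iff) normal_core.
Proof. intros u v H. unfold normal_core. now setoid_rewrite H. Qed.

Lemma normal_core_component_one (g : word) : normal_core g -> component_one g.
Proof. intros Hg. specialize (Hg [] eq_refl). now rewrite app_nil_r in Hg. Qed.

Lemma normal_core_eps0 (g : word) : normal_core g -> eps0 g = 0%Z.
Proof. intros Hg. now apply component_one_eps0, normal_core_component_one. Qed.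

Lemma normal_core_nil : normal_core nil.
Proof. intros k _. rewrite app_nil_l, mul_winv_l. apply component_one_nil. Qed.

Lemma normal_core_app (g h : word) :
  normal_core g -> normal_core h -> normal_core (g ++ h).
Proof.
  intros Hg Hh k Hk.
  assert (E : As_eq (winv k ++ (g ++ h) ++ k) ((winv k ++ g ++ k) ++ winv k ++ h ++ k)).
  { rewrite <- !app_assoc. now rewrite (mul_winv_rK k). }
  rewrite E. apply component_one_app; auto.
Qed.

Lemma normal_core_winv (g : word) : normal_core g -> normal_core (winv g).
Proof.
  intros Hg k Hk. specialize (Hg k Hk). apply component_one_winv in Hg.
  now rewrite !winv_app, winv_winv, <- app_assoc in Hg.
Qed.

Lemma normal_core_conj (g k : word) :
  eps0 k = 0%Z -> normal_core (winv k ++ g ++ k) <-> normal_core g.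
Proof.
  intros Hk; split; intros Hg k' Hk'.
  - specialize (Hg (winv k ++ k') ltac:(rewrite eps0_app, eps0_winv; lia)).
    rewrite winv_app, winv_winv, <- !app_assoc in Hg.
    now rewrite !(mul_winv_rK k) in Hg.
  - specialize (Hg (k ++ k') ltac:(rewrite eps0_app; lia)).
    rewrite winv_app, <- !app_assoc in Hg. now rewrite <- !app_assoc.
Qed.

Lemma normal_core_comm_a (h : word) : eps0 h = 0%Z -> normal_core (comm_a h).
Proof.
  intros Hh k Hk.
  assert (E : As_eq (winv k ++ comm_a h ++ k) (winv (comm_a k) ++ comm_a (h ++ k))).
  { unfold comm_a. rewrite !winv_app, winv_winv, <- !app_assoc.
    now rewrite (mul_winv_rK (gen X a)), (mul_winv_rK k). }
  rewrite E. apply component_one_app.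
  - now apply component_one_winv, component_one_comm_a.
  - apply component_one_comm_a. rewrite eps0_app; lia.
Qed.

Lemma conj_gen_eq_comm_a (g : word) :
  As_eq (geninv X a ++ g ++ gen X a) (comm_a (winv g) ++ g).
Proof.
  unfold comm_a. rewrite winv_winv, <- !app_assoc.
  now rewrite (mul_winv_l g), app_nil_r.
Qed.

Lemma normal_core_app_l (g h : word) :
  normal_core g -> normal_core (g ++ h) <-> normal_core h.
Proof.
  intros Hg; split; intros H; [|now apply normal_core_app].
  rewrite <- (mul_winv_lK g h). now apply normal_core_app; [apply normal_core_winv|].
Qed.

Lemma normal_core_conj_gen (g : word) :
  normal_core (geninv X a ++ g ++ gen X a) <-> normal_core g.
Proof.
  assert (Hc : eps0 g = 0%Z -> normal_core (comm_a (winv g))).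
  { intros Hg. apply normal_core_comm_a. now rewrite eps0_winv, Hg. }
  rewrite conj_gen_eq_comm_a. split; intros H.
  - assert (Hg : eps0 g = 0%Z).
    { pose proof (normal_core_eps0 _ H) as E. now rewrite eps0_app, eps0_comm_a in E. }
    exact (proj1 (normal_core_app_l _ _ (Hc Hg)) H).
  - apply normal_core_app; [apply Hc, normal_core_eps0|]; exact H.
Qed.

Lemma normal_core_conj_letter (s : bool) (g : word) :
  normal_core g -> normal_core ((a, s) :: g ++ [(a, negb s)]).
Proof.
  intros Hg; destruct s; cbn [negb].
  - apply normal_core_conj_gen.
    change ((a, true) :: g ++ [(a, false)]) with (gen X a ++ g ++ geninv X a).
    refine (proj1 (normal_core_Proper g _ _) Hg). symmetry.
    rewrite <- !app_assoc, (mul_winv_lK (gen X a)), (mul_winv_l (gen X a)), app_nil_r.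
    reflexivity.
  - now apply normal_core_conj_gen.
Qed.

Lemma gen_qop (x y : X) : As_eq (gen X (qop X x y)) (geninv X y ++ gen X x ++ gen X y).
Proof. exact (As_eq_ctx [] [] (As_rel X x y)). Qed.

Definition gen_over_a (x : X) : word := gen X x ++ geninv X a.

Lemma eps0_gen_over_a (x : X) : eps0 (gen_over_a x) = 0%Z.
Proof. reflexivity. Qed.

Lemma gen_over_a_qop (x z : X) :
  As_eq (gen_over_a (qop X x z))
    ((geninv X a ++ (winv (gen_over_a z) ++ gen_over_a x) ++ gen X a) ++ gen_over_a z).
Proof.
  unfold gen_over_a. rewrite gen_qop, !winv_app, winv_gen, winv_geninv, <- !app_assoc.
  now rewrite !(mul_winv_lK (gen X a)).
Qed.

Lemma normal_core_gen_over_a_qop (x z : X) :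
  normal_core (gen_over_a (qop X x z)) <-> normal_core (gen_over_a x).
Proof.
  assert (Hc : normal_core (comm_a (winv (winv (gen_over_a z) ++ gen_over_a x)))).
  { apply normal_core_comm_a.
    now rewrite eps0_winv, eps0_app, eps0_winv, !eps0_gen_over_a. }
  rewrite gen_over_a_qop, conj_gen_eq_comm_a, <- !app_assoc, (normal_core_app_l _ _ Hc).
  apply normal_core_conj, eps0_gen_over_a.
Qed.

Lemma normal_core_gen_over_a (Hconn : connected X) (x : X) : normal_core (gen_over_a x).
Proof.
  assert (Ha : normal_core (gen_over_a a)).
  { unfold gen_over_a. rewrite (mul_winv_r (gen X a)). apply normal_core_nil. }
  enough (Htransport : forall u v,
    clos_refl_sym_trans X (fun u v => exists z, v = qop X u z) u v ->
    normal_core (gen_over_a u) <-> normal_core (gen_over_a v)).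
  { now apply (Htransport a x (Hconn a x)). }
  induction 1 as [u v [z ->]| | |]; try tauto.
  now rewrite normal_core_gen_over_a_qop.
Qed.

Lemma cancel_letter (x : X) (s : bool) (r : word) : As_eq ((x, s) :: (x, negb s) :: r) r.
Proof. exact (As_eq_ctx [] r (As_cancel X x s)). Qed.

Lemma cancel_letter_inv (x : X) (s : bool) (r : word) : As_eq ((x, negb s) :: (x, s) :: r) r.
Proof. rewrite <- (negb_involutive s) at 2. apply cancel_letter. Qed.

(* Z.to_nat is 0 on negative integers, so at most one factor is non-empty. *)
Definition gen_pow (n : Z) : word :=
  repeat (a, true) (Z.to_nat n) ++ repeat (a, false) (Z.to_nat (- n)).

Lemma gen_pow_add_sign (s : bool) (n : Z) :
  As_eq (gen_pow (n + if s then 1 else -1)) (gen_pow n ++ [(a, s)]).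
Proof.
  unfold gen_pow. destruct s.
  - destruct (Z.leb_spec 0 n).
    + replace (Z.to_nat (n + 1)) with (S (Z.to_nat n)) by lia.
      replace (Z.to_nat (- (n + 1))) with 0%nat by lia.
      replace (Z.to_nat (- n)) with 0%nat by lia.
      cbn [repeat]. now rewrite !app_nil_r, repeat_cons.
    + replace (Z.to_nat (n + 1)) with 0%nat by lia.
      replace (Z.to_nat n) with 0%nat by lia.
      replace (Z.to_nat (- n)) with (S (Z.to_nat (- (n + 1)))) by lia.
      cbn [repeat app]. rewrite app_comm_cons, repeat_cons, <- app_assoc. cbn [app].
      now rewrite (cancel_letter a false []), app_nil_r.
  - destruct (Z.leb_spec n 0).
    + replace (Z.to_nat (n + -1)) with 0%nat by lia.
      replace (Z.to_nat n) with 0%nat by lia.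
      replace (Z.to_nat (- (n + -1))) with (S (Z.to_nat (- n))) by lia.
      cbn [repeat app]. now rewrite repeat_cons.
    + replace (Z.to_nat (- (n + -1))) with 0%nat by lia.
      replace (Z.to_nat (- n)) with 0%nat by lia.
      replace (Z.to_nat n) with (S (Z.to_nat (n + -1))) by lia.
      cbn [repeat app]. rewrite !app_nil_r, app_comm_cons, repeat_cons, <- app_assoc. cbn [app].
      now rewrite (cancel_letter a true []), app_nil_r.
Qed.

Lemma normal_core_letter (Hconn : connected X) (x : X) (s : bool) :
  normal_core [(x, s); (a, negb s)].
Proof.
  destruct s; [exact (normal_core_gen_over_a Hconn x)|].
  apply (normal_core_Proper _ _ (cancel_letter a false _)).
  apply (normal_core_conj_letter false (winv (gen_over_a x))).
  apply normal_core_winv, normal_core_gen_over_a, Hconn.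
Qed.

Lemma eps0_cons (p : X * bool) (w : word) :
  eps0 (p :: w) = ((if snd p then 1 else -1) + eps0 w)%Z.
Proof. reflexivity. Qed.

Lemma normal_core_mul_gen_pow (Hconn : connected X) (w : word) :
  normal_core (w ++ gen_pow (- eps0 w)).
Proof.
  induction w as [|[x s] w IH]; [exact normal_core_nil|].
  rewrite eps0_cons; cbn [snd].
  replace (- ((if s then 1 else -1) + eps0 w))%Z
    with (- eps0 w + if negb s then 1 else -1)%Z by (destruct s; cbn [negb]; lia).
  set (g := w ++ gen_pow (- eps0 w)) in IH.
  assert (E : As_eq (((x, s) :: w) ++ gen_pow (- eps0 w + if negb s then 1 else -1))
                    ([(x, s); (a, negb s)] ++ (a, s) :: g ++ [(a, negb s)])).
  { rewrite gen_pow_add_sign. cbn [app]. rewrite cancel_letter_inv.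
    unfold g. now rewrite <- app_assoc. }
  rewrite E.
  apply normal_core_app; [apply normal_core_letter, Hconn|].
  apply normal_core_conj_letter, IH.
Qed.

Lemma component_one_kernel (Hconn : connected X) (w : word) :
  eps0 w = 0%Z -> component_one w.
Proof.
  intros Hw. apply normal_core_component_one.
  pose proof (normal_core_mul_gen_pow Hconn w) as H.
  rewrite Hw in H. cbn in H. now rewrite app_nil_r in H.
Qed.

End AdjointGroup.

Theorem proposition5p2 (X : quandle) (a : X) :
  connected X -> @tilde_connected X a.
Proof.
  intros Hconn g h Hg Hh.
  change (tilde_equiv X a g h).
  transitivity (@nil (X * bool)).
  - exact (component_one_kernel X a Hconn g Hg).
  - symmetry. exact (component_one_kernel X a Hconn h Hh).
Qed.
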